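(* For $(s_n,x_n),(s,x)\in T\times[0,\infty)$, as $n\to\infty$, $$\rho_2((s_n,x_n),(s,x))\to0\iff\big[x_n\to x\ \text{and}\ x\,(R_{s_n,s}(1,1)-1)\to0\big].$$
   Context: $(U_1(t))_{t\in T}$ is a process with uniform $(0,1)$ margins such that the bivariate tail copulas $R_{s,t}(x,y)=\lim_{u\downarrow0}u^{-1}\mathbb{P}\{U_1(s)\le ux,U_1(t)\le uy\}$ exist for all $s,t\in T$, $x,y\ge0$. $\rho_2((s,x),(t,y))=(x-2R_{s,t}(x,y)+y)^{1/2}$, the standard deviation semimetric of a centered Gaussian process $W$ on $T\times[0,\infty)$ with covariance $R_{s,t}(x,y)$. *)

From Stdlib Require Import Reals Lra.
Open Scope R_scope.

Definition prob_space (Omega : Type) (F : (Omega -> Prop) -> Prop)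
  (P : (Omega -> Prop) -> R) : Prop :=
  F (fun _ => True) /\
  (forall A, F A -> F (fun w => ~ A w)) /\
  (forall A : nat -> Omega -> Prop, (forall n, F (A n)) ->
     F (fun w => exists n, A n w)) /\
  (forall A, F A -> 0 <= P A) /\
  P (fun _ => True) = 1 /\
  (forall A : nat -> Omega -> Prop,
     (forall n, F (A n)) ->
     (forall m n w, m <> n -> A m w -> A n w -> False) ->
     infinite_sum (fun n => P (A n)) (P (fun w => exists n, A n w))).

Definition uniform_margins (Omega T : Type) (F : (Omega -> Prop) -> Prop)
  (P : (Omega -> Prop) -> R) (U : T -> Omega -> R) : Prop :=
  (forall t u, F (fun w => U t w <= u)) /\
  (forall t u, 0 <= u <= 1 -> P (fun w => U t w <= u) = u).

Definition is_tail_copula (Omega T : Type) (P : (Omega -> Prop) -> R)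
  (U : T -> Omega -> R) (Rtc : T -> T -> R -> R -> R) : Prop :=
  forall s t x y, 0 <= x -> 0 <= y ->
    forall eps, 0 < eps -> exists delta, 0 < delta /\
      forall u, 0 < u < delta ->
        Rabs (/ u * P (fun w => U s w <= u * x /\ U t w <= u * y)
              - Rtc s t x y) < eps.

Definition rho2 {T : Type} (Rtc : T -> T -> R -> R -> R)
  (p q : T * R) : R :=
  sqrt (snd p - 2 * Rtc (fst p) (fst q) (snd p) (snd q) + snd q).

From Stdlib Require Import Reals Lra Lia Classical FunctionalExtensionality PropExtensionality.
Open Scope R_scope.

(* The tail copula inherits from the joint probabilities it is a limit of the
   bounds [0 <= R_{s,t}(a,b) <= min(a,b)] and the 1-Lipschitz property in each
   argument, and it is positively homogeneous.  Hence
   [rho_2^2 = x_n + x - 2 R_{s_n,s}(x_n,x)] is at least [|x_n - x|], and it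
   differs from [2 x (1 - R_{s_n,s}(1,1))] by at most [3 |x_n - x|]. *)

Lemma pred_ext {O : Type} (A B : O -> Prop) : (forall w, A w <-> B w) -> A = B.
Proof.
  intros H; apply functional_extensionality; intro w.
  apply propositional_extensionality; auto.
Qed.

Lemma infinite_sum_const_eq0 (c l : R) : infinite_sum (fun _ => c) l -> c = 0.
Proof.
  intros Hs; destruct (Req_dec c 0) as [|Hc]; auto; exfalso.
  assert (Heps : 0 < Rabs c / 2) by (apply Rabs_pos_lt in Hc; lra).
  destruct (Hs _ Heps) as [N HN].
  assert (h1 := HN N (le_n _)); assert (h2 := HN (S N) (le_S _ _ (le_n _))).
  unfold R_dist in *; simpl in h2.
  revert h1 h2; generalize (sum_f_R0 (fun _ : nat => c) N); intros S h1 h2.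
  split_Rabs; lra.
Qed.

Section Probability.

Variables (Omega : Type) (F : (Omega -> Prop) -> Prop) (P : (Omega -> Prop) -> R).
Hypothesis hP : prob_space Omega F P.

Lemma event_compl A : F A -> F (fun w => ~ A w).
Proof. destruct hP as (_ & h & _); auto. Qed.

Lemma event_union A B : F A -> F B -> F (fun w => A w \/ B w).
Proof.
  intros HA HB; destruct hP as (_ & _ & hU & _).
  set (C := fun n : nat => match n with 0%nat => A | _ => B end).
  replace (fun w => A w \/ B w) with (fun w => exists n, C n w).
  - apply hU; intros [|n]; simpl; auto.
  - apply pred_ext; intro w; split.
    + intros [[|n] H]; simpl in H; auto.
    + intros [H|H]; [exists 0%nat | exists 1%nat]; simpl; auto.
Qed.

Lemma event_inter A B : F A -> F B -> F (fun w => A w /\ B w).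
Proof.
  intros HA HB.
  replace (fun w => A w /\ B w) with (fun w => ~ (~ A w \/ ~ B w)).
  - apply event_compl, event_union; apply event_compl; auto.
  - apply pred_ext; intro w; split; [intro h; split; apply NNPP; tauto | tauto].
Qed.

Lemma event_false : F (fun _ => False).
Proof.
  replace (fun _ : Omega => False) with (fun _ : Omega => ~ True).
  - apply event_compl, hP.
  - apply pred_ext; tauto.
Qed.

Lemma prob_false : P (fun _ => False) = 0.
Proof.
  destruct hP as (_ & _ & _ & _ & _ & hadd).
  apply (infinite_sum_const_eq0 _ (P (fun _ => exists _ : nat, False))).
  exact (hadd (fun _ _ => False) (fun _ => event_false) (fun _ _ _ _ h _ => h)).
Qed.

Lemma prob_disjoint_union A B : F A -> F B ->
  (forall w, A w -> B w -> False) -> P (fun w => A w \/ B w) = P A + P B.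
Proof.
  intros HA HB Hd; destruct hP as (_ & _ & _ & _ & _ & hadd).
  set (C := fun n : nat => match n with 0%nat => A | 1%nat => B | _ => fun _ => False end).
  assert (HC : infinite_sum (fun n => P (C n)) (P (fun w => exists n, C n w))).
  { apply hadd.
    - intros [|[|n]]; simpl; auto using event_false.
    - intros [|[|m]] [|[|n]] w Hmn; simpl; try tauto; intros; eauto. }
  replace (fun w => A w \/ B w) with (fun w => exists n, C n w).
  2:{ apply pred_ext; intro w; split.
      - intros [[|[|n]] h]; simpl in h; tauto.
      - intros [h|h]; [exists 0%nat | exists 1%nat]; exact h. }
  apply (uniqueness_sum _ _ _ HC).
  assert (Hsum : forall n, sum_f_R0 (fun n => P (C n)) (S n) = P A + P B).
  { induction n as [|n IH]; [reflexivity|].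
    simpl sum_f_R0 in *; rewrite IH; simpl; rewrite prob_false; ring. }
  intros eps Heps; exists 1%nat; intros [|n] Hn; [lia|].
  unfold R_dist; rewrite Hsum, Rminus_diag, Rabs_R0; exact Heps.
Qed.

Lemma prob_split A B : F A -> F B ->
  (forall w, A w -> B w) -> P B = P A + P (fun w => B w /\ ~ A w).
Proof.
  intros HA HB Hs.
  rewrite <- prob_disjoint_union; auto using event_inter, event_compl.
  - f_equal; apply pred_ext; intro w; split; [|intros [h|[h _]]; auto].
    intro hb; destruct (classic (A w)); auto.
  - tauto.
Qed.

Lemma prob_mono A B : F A -> F B -> (forall w, A w -> B w) -> P A <= P B.
Proof.
  intros HA HB Hs; rewrite (prob_split A B); auto.
  assert (0 <= P (fun w => B w /\ ~ A w)); [|lra].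
  apply hP, event_inter, event_compl; auto.
Qed.

Lemma prob_inter_increment A A' B : F A -> F A' -> F B -> (forall w, A w -> A' w) ->
  P (fun w => A' w /\ B w) - P (fun w => A w /\ B w) <= P A' - P A.
Proof.
  intros HA HA' HB Hs.
  rewrite (prob_split (fun w => A w /\ B w) (fun w => A' w /\ B w)),
    (prob_split A A'); auto using event_inter; [|firstorder].
  assert (P (fun w => (A' w /\ B w) /\ ~ (A w /\ B w)) <= P (fun w => A' w /\ ~ A w));
    [|lra].
  apply prob_mono; auto using event_inter, event_compl; tauto.
Qed.

End Probability.

Definition lim0 (f : R -> R) (L : R) : Prop :=
  forall eps, 0 < eps -> exists delta, 0 < delta /\
    forall u, 0 < u < delta -> Rabs (f u - L) < eps.

Lemma lim0_const c : lim0 (fun _ => c) c.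
Proof.
  intros eps He; exists 1; split; [lra|].
  intros; rewrite Rminus_diag, Rabs_R0; auto.
Qed.

Lemma lim0_minus f g L M : lim0 f L -> lim0 g M -> lim0 (fun u => f u - g u) (L - M).
Proof.
  intros Hf Hg eps He.
  destruct (Hf (eps / 2)) as [d1 [Hd1 H1]]; [lra|].
  destruct (Hg (eps / 2)) as [d2 [Hd2 H2]]; [lra|].
  exists (Rmin d1 d2); split; [apply Rmin_pos; auto|].
  intros u Hu; assert (Hm1 := Rmin_l d1 d2); assert (Hm2 := Rmin_r d1 d2).
  specialize (H1 u ltac:(lra)); specialize (H2 u ltac:(lra)).
  split_Rabs; lra.
Qed.

Lemma lim0_ge0 h L d : lim0 h L -> 0 < d -> (forall u, 0 < u < d -> 0 <= h u) -> 0 <= L.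
Proof.
  intros HL Hd Hh; apply Rnot_lt_le; intro HL0.
  destruct (HL (- L)) as [d' [Hd' H']]; [lra|].
  set (u := Rmin d d' / 2).
  assert (Hm := Rmin_pos d d' Hd Hd').
  assert (Hm1 := Rmin_l d d'); assert (Hm2 := Rmin_r d d').
  specialize (Hh u ltac:(unfold u; lra)); specialize (H' u ltac:(unfold u; lra)).
  split_Rabs; lra.
Qed.

Lemma lim0_le f g L M d : lim0 f L -> lim0 g M -> 0 < d ->
  (forall u, 0 < u < d -> f u <= g u) -> L <= M.
Proof.
  intros Hf Hg Hd Hfg.
  assert (0 <= M - L); [|lra].
  apply (lim0_ge0 (fun u => g u - f u) _ d (lim0_minus _ _ _ _ Hg Hf) Hd).
  intros u Hu; specialize (Hfg u Hu); lra.
Qed.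

Lemma lim0_unique f g L M : (forall u, 0 < u -> f u = g u) ->
  lim0 f L -> lim0 g M -> L = M.
Proof.
  intros Hfg Hf Hg; apply Rle_antisym.
  - apply (lim0_le f g L M 1 Hf Hg Rlt_0_1); intros u Hu; rewrite Hfg by lra; lra.
  - apply (lim0_le g f M L 1 Hg Hf Rlt_0_1); intros u Hu; rewrite Hfg by lra; lra.
Qed.

Lemma lim0_scale f L c : 0 < c -> lim0 f L -> lim0 (fun u => c * f (u * c)) (c * L).
Proof.
  intros Hc Hf eps He.
  destruct (Hf (eps / c)) as [d [Hd Hd']]; [apply Rdiv_lt_0_compat; lra|].
  exists (d / c); split; [apply Rdiv_lt_0_compat; lra|].
  intros u [Hu0 Hu]; specialize (Hd' (u * c)).
  rewrite <- Rmult_minus_distr_l, Rabs_mult, (Rabs_pos_eq c) by lra.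
  apply (Rmult_lt_reg_l (/ c)); [apply Rinv_0_lt_compat; lra|].
  replace (/ c * (c * Rabs (f (u * c) - L))) with (Rabs (f (u * c) - L)) by (field; lra).
  replace (/ c * eps) with (eps / c) by (unfold Rdiv; ring).
  apply Hd'; split; [nra|].
  apply (Rmult_lt_compat_r c) in Hu; auto.
  replace (d / c * c) with d in Hu by (field; lra); exact Hu.
Qed.

Definition joint_tail_ratio {Omega T : Type} (P : (Omega -> Prop) -> R)
  (U : T -> Omega -> R) (s t : T) (a b u : R) : R :=
  / u * P (fun w => U s w <= u * a /\ U t w <= u * b).

Lemma mult_in_unit_interval a u : 0 <= a -> 0 < u < / (a + 1) -> 0 <= u * a <= 1.
Proof.
  intros ha [h1 h2].
  assert (Hinv : / (a + 1) * (a + 1) = 1) by (field; lra).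
  assert (0 < / (a + 1)) by (apply Rinv_0_lt_compat; lra).
  nra.
Qed.

Section TailCopula.

Variables (Omega T : Type) (F : (Omega -> Prop) -> Prop) (P : (Omega -> Prop) -> R).
Variables (U : T -> Omega -> R) (Rtc : T -> T -> R -> R -> R).
Hypothesis hP : prob_space Omega F P.
Hypothesis hU : uniform_margins Omega T F P U.
Hypothesis hR : is_tail_copula Omega T P U Rtc.

Lemma tail_copula_lim0 s t a b : 0 <= a -> 0 <= b ->
  lim0 (joint_tail_ratio P U s t a b) (Rtc s t a b).
Proof. exact (hR s t a b). Qed.

Lemma margin_event t v : F (fun w => U t w <= v).
Proof. apply hU. Qed.

Lemma joint_event s t v v' : F (fun w => U s w <= v /\ U t w <= v').
Proof. apply (event_inter _ _ _ hP); apply margin_event. Qed.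

Lemma tail_copula_ge0 s t a b : 0 <= a -> 0 <= b -> 0 <= Rtc s t a b.
Proof.
  intros ha hb; apply (lim0_ge0 _ _ 1 (tail_copula_lim0 s t a b ha hb) Rlt_0_1).
  intros u Hu; unfold joint_tail_ratio; apply Rmult_le_pos.
  - left; apply Rinv_0_lt_compat; lra.
  - apply hP, joint_event.
Qed.

Lemma tail_copula_le_l s t a b : 0 <= a -> 0 <= b -> Rtc s t a b <= a.
Proof.
  intros ha hb.
  apply (lim0_le _ _ _ _ (/ (a + 1)) (tail_copula_lim0 s t a b ha hb) (lim0_const a));
    [apply Rinv_0_lt_compat; lra|].
  intros u Hu; destruct (mult_in_unit_interval a u ha Hu) as [h1 h2].
  unfold joint_tail_ratio.
  apply Rle_trans with (/ u * P (fun w => U s w <= u * a)).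
  - apply Rmult_le_compat_l; [left; apply Rinv_0_lt_compat; lra|].
    apply (prob_mono _ _ _ hP); auto using margin_event, joint_event; tauto.
  - rewrite (proj2 hU) by lra; right; field; lra.
Qed.

Lemma tail_copula_sym s t a b : 0 <= a -> 0 <= b -> Rtc s t a b = Rtc t s b a.
Proof.
  intros ha hb.
  apply (lim0_unique _ _ _ _ (fun u _ => eq_refl)
    (tail_copula_lim0 s t a b ha hb)).
  intros eps He; destruct (tail_copula_lim0 t s b a hb ha eps He) as [d [Hd H]].
  exists d; split; auto; intros u Hu.
  unfold joint_tail_ratio in *.
  replace (fun w => U s w <= u * a /\ U t w <= u * b)
    with (fun w => U t w <= u * b /\ U s w <= u * a)
    by (apply pred_ext; tauto).
  auto.
Qed.

Lemma tail_copula_le_r s t a b : 0 <= a -> 0 <= b -> Rtc s t a b <= b.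
Proof. intros ha hb; rewrite tail_copula_sym; auto; apply tail_copula_le_l; auto. Qed.

Lemma tail_copula_increment_l s t a a' b : 0 <= a -> a <= a' -> 0 <= b ->
  0 <= Rtc s t a' b - Rtc s t a b <= a' - a.
Proof.
  intros ha haa hb; assert (ha' : 0 <= a') by lra.
  assert (Hlim := lim0_minus _ _ _ _ (tail_copula_lim0 s t a' b ha' hb)
                    (tail_copula_lim0 s t a b ha hb)).
  assert (Hua : forall u, 0 < u -> u * a <= u * a') by (intros; nra).
  split.
  - apply (lim0_ge0 _ _ 1 Hlim Rlt_0_1).
    intros u Hu; unfold joint_tail_ratio.
    rewrite <- Rmult_minus_distr_l; apply Rmult_le_pos;
      [left; apply Rinv_0_lt_compat; lra|].
    assert (Hu' := Hua u (proj1 Hu)).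
    cut (P (fun w => U s w <= u * a /\ U t w <= u * b)
         <= P (fun w => U s w <= u * a' /\ U t w <= u * b)); [lra|].
    apply (prob_mono _ _ _ hP); auto using joint_event.
    intros w [h1 h2]; split; lra.
  - apply (lim0_le _ _ _ _ (/ (a' + 1)) Hlim (lim0_const (a' - a)));
      [apply Rinv_0_lt_compat; lra|].
    intros u Hu; destruct (mult_in_unit_interval a' u ha' Hu) as [h1 h2].
    assert (Hu' := Hua u (proj1 Hu)).
    unfold joint_tail_ratio; rewrite <- Rmult_minus_distr_l.
    replace (a' - a) with (/ u * (P (fun w => U s w <= u * a') - P (fun w => U s w <= u * a)))
      by (rewrite !(proj2 hU) by nra; field; lra).
    apply Rmult_le_compat_l; [left; apply Rinv_0_lt_compat; lra|].
    apply (prob_inter_increment _ _ _ hP); auto using margin_event.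
    intros w h; lra.
Qed.

Lemma tail_copula_lipschitz_l s t a a' b : 0 <= a -> 0 <= a' -> 0 <= b ->
  Rabs (Rtc s t a' b - Rtc s t a b) <= Rabs (a' - a).
Proof.
  intros ha ha' hb; destruct (Rle_dec a a').
  - assert (H := tail_copula_increment_l s t a a' b ha r hb); split_Rabs; lra.
  - assert (H := tail_copula_increment_l s t a' a b ha' ltac:(lra) hb); split_Rabs; lra.
Qed.

Lemma tail_copula_homogeneous s t c a b : 0 < c -> 0 <= a -> 0 <= b ->
  Rtc s t (c * a) (c * b) = c * Rtc s t a b.
Proof.
  intros hc ha hb.
  apply (lim0_unique (joint_tail_ratio P U s t (c * a) (c * b))
                     (fun u => c * joint_tail_ratio P U s t a b (u * c))).
  - intros u Hu; unfold joint_tail_ratio.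
    rewrite !Rmult_assoc; field; lra.
  - apply tail_copula_lim0; apply Rmult_le_pos; lra.
  - apply lim0_scale, tail_copula_lim0; auto.
Qed.

Lemma tail_copula_diag s t c : 0 <= c -> Rtc s t c c = c * Rtc s t 1 1.
Proof.
  intros hc; destruct (Req_dec c 0) as [->|hc0].
  - assert (h1 := tail_copula_le_l s t 0 0 (Rle_refl 0) (Rle_refl 0)).
    assert (h2 := tail_copula_ge0 s t 0 0 (Rle_refl 0) (Rle_refl 0)); lra.
  - rewrite <- (Rmult_1_r c) at 1 2; apply tail_copula_homogeneous; lra.
Qed.

End TailCopula.

Lemma Un_cv_const c : Un_cv (fun _ => c) c.
Proof.
  intros eps He; exists 0%nat; intros n _.
  unfold R_dist; rewrite Rminus_diag, Rabs_R0; exact He.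
Qed.

Lemma Un_cv_scal_0 k a : Un_cv a 0 -> Un_cv (fun n => k * a n) 0.
Proof.
  intros Ha; rewrite <- (Rmult_0_r k).
  exact (CV_mult _ _ _ _ (Un_cv_const k) Ha).
Qed.

Lemma Un_cv_squeeze_0 a b : (forall n, Rabs (a n) <= b n) -> Un_cv b 0 -> Un_cv a 0.
Proof.
  intros Hab Hb eps He; destruct (Hb eps He) as [N HN]; exists N; intros n Hn.
  specialize (HN n Hn); specialize (Hab n); unfold R_dist in *.
  rewrite Rminus_0_r in *; split_Rabs; lra.
Qed.

Lemma Un_cv_sqrt_0 r : (forall n, 0 <= r n) ->
  Un_cv (fun n => sqrt (r n)) 0 <-> Un_cv r 0.
Proof.
  intros Hr; split; intro H.
  - apply (Un_cv_ext (fun n => sqrt (r n) * sqrt (r n))); [intro n; apply sqrt_sqrt, Hr|].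
    rewrite <- (Rmult_0_r 0); exact (CV_mult _ _ _ _ H H).
  - rewrite <- sqrt_0; exact (continuity_seq sqrt r 0 (continuity_pt_sqrt 0 (Rle_refl 0)) H).
Qed.

Lemma Un_cv_sqrt_0_iff_of_bounds (r d e : nat -> R) (C : R) :
  (forall n, Rabs (d n) <= r n) ->
  (forall n, Rabs (r n + 2 * e n) <= C * Rabs (d n)) ->
  Un_cv (fun n => sqrt (r n)) 0 <-> Un_cv d 0 /\ Un_cv e 0.
Proof.
  intros Hdr Hre.
  assert (Hr0 : forall n, 0 <= r n) by (intro n; eapply Rle_trans; [apply Rabs_pos | auto]).
  assert (Hgap : Un_cv d 0 -> Un_cv (fun n => r n + 2 * e n) 0).
  { intro Hd; apply (Un_cv_squeeze_0 _ _ Hre), Un_cv_scal_0.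
    rewrite <- Rabs_R0; apply cv_cvabs, Hd. }
  rewrite Un_cv_sqrt_0 by exact Hr0; split.
  - intro Hr.
    assert (Hd : Un_cv d 0) by exact (Un_cv_squeeze_0 _ _ Hdr Hr).
    split; [exact Hd|].
    apply (Un_cv_ext (fun n => / 2 * ((r n + 2 * e n) - r n))); [intro n; field|].
    apply Un_cv_scal_0; rewrite <- (Rminus_0_r 0); exact (CV_minus _ _ _ _ (Hgap Hd) Hr).
  - intros [Hd He].
    apply (Un_cv_ext (fun n => (r n + 2 * e n) - 2 * e n)); [intro n; ring|].
    rewrite <- (Rminus_0_r 0); exact (CV_minus _ _ _ _ (Hgap Hd) (Un_cv_scal_0 2 e He)).
Qed.

Theorem lemmaA5 (Omega T : Type) (F : (Omega -> Prop) -> Prop)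
  (P : (Omega -> Prop) -> R) (U : T -> Omega -> R)
  (Rtc : T -> T -> R -> R -> R)
  (hP : prob_space Omega F P)
  (hU : uniform_margins Omega T F P U)
  (hR : is_tail_copula Omega T P U Rtc)
  (sn : nat -> T) (xn : nat -> R) (s : T) (x : R)
  (hxn : forall n, 0 <= xn n) (hx : 0 <= x) :
  Un_cv (fun n => rho2 Rtc (sn n, xn n) (s, x)) 0 <->
  (Un_cv xn x /\ Un_cv (fun n => x * (Rtc (sn n) s 1 1 - 1)) 0).
Proof.
  assert (Hxn : Un_cv xn x <-> Un_cv (fun n => xn n - x) 0).
  { unfold Un_cv, R_dist; setoid_rewrite Rminus_0_r; reflexivity. }
  rewrite Hxn; unfold rho2; simpl.
  apply Un_cv_sqrt_0_iff_of_bounds with (C := 3); intro n.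
  - assert (h1 := tail_copula_le_l _ _ _ _ _ _ hP hU hR (sn n) s (xn n) x (hxn n) hx).
    assert (h2 := tail_copula_le_r _ _ _ _ _ _ hP hU hR (sn n) s (xn n) x (hxn n) hx).
    split_Rabs; lra.
  - assert (h1 := tail_copula_lipschitz_l _ _ _ _ _ _ hP hU hR (sn n) s x (xn n) x hx (hxn n) hx).
    assert (h2 := tail_copula_diag _ _ _ _ _ _ hP hU hR (sn n) s x hx).
    split_Rabs; lra.
Qed.
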